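(* Let $\mathcal H$ be a separable complex Hilbert space, $A\in L(\mathcal H)^+$ and $T\in L(\mathcal H)$. Then $T$ is an $A$-projection if and only if $P_{\overline{R(A)}}T$ is idempotent (i.e. $(P_{\overline{R(A)}}T)^2=P_{\overline{R(A)}}T$) and $A$-selfadjoint.
   Context: $L(\mathcal H)^+$ denotes positive (semidefinite) bounded operators; $P_{\mathcal M}$ is the orthogonal projection onto a closed subspace $\mathcal M$. For $A\in L(\mathcal H)^+$, $\|x\|_A=\langle Ax,x\rangle^{1/2}$. An operator $C\in L(\mathcal H)$ is $A$-selfadjoint if $AC=C^*A$. $T$ is an $A$-projection if $\|y-Ty\|_A\le\|y-s\|_A$ for all $y\in\mathcal H$ and all $s\in\overline{R(T)}$. *)

From HB Require Import structures.
From mathcomp Require Import all_boot all_order all_algebra.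
From mathcomp Require Import reals.
From mathcomp Require Import complex.
Set Implicit Arguments. Unset Strict Implicit. Unset Printing Implicit Defensive.
Import Order.TTheory GRing.Theory Num.Theory.
Local Open Scope ring_scope.

Section Hilbert.
Variables (R : realType) (V : lmodType R[i]) (ip : V -> V -> R[i]).

Definition is_inner_product : Prop :=
  [/\ forall (a : R[i]) (x y z : V), ip (a *: x + y) z = a * ip x z + ip y z,
      forall x y : V, ip x y = (ip y x)^*,
      forall x : V, 0 <= ip x x
    & forall x : V, ip x x = 0 -> x = 0].

Definition hnorm (x : V) : R[i] := sqrtC (ip x x).

Definition cauchy_seq (u : nat -> V) : Prop :=
  forall e : R[i], 0 < e -> exists N : nat,
    forall m n : nat, (N <= m)%N -> (N <= n)%N -> hnorm (u m - u n) < e.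

Definition converges_to (u : nat -> V) (x : V) : Prop :=
  forall e : R[i], 0 < e -> exists N : nat,
    forall n : nat, (N <= n)%N -> hnorm (u n - x) < e.

Definition complete_ip : Prop :=
  forall u : nat -> V, cauchy_seq u -> exists x : V, converges_to u x.

Definition separable_ip : Prop :=
  exists d : nat -> V, forall (x : V) (e : R[i]), 0 < e ->
    exists n : nat, hnorm (x - d n) < e.

Definition separable_hilbert : Prop :=
  [/\ is_inner_product, complete_ip & separable_ip].

Definition bounded_op (T : V -> V) : Prop :=
  (forall (a : R[i]) (x y : V), T (a *: x + y) = a *: T x + T y) /\
  exists M : R[i], forall x : V, hnorm (T x) <= M * hnorm x.

Definition positive_op (A : V -> V) : Prop :=
  bounded_op A /\ forall x : V, 0 <= ip (A x) x.

Definition closure_range (T : V -> V) (y : V) : Prop :=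
  forall e : R[i], 0 < e -> exists x : V, hnorm (y - T x) < e.

Definition is_orth_proj (P : V -> V) (M : V -> Prop) : Prop :=
  (forall x : V, M (P x)) /\
  (forall x m : V, M m -> ip (x - P x) m = 0).

Definition is_adjoint (C D : V -> V) : Prop :=
  forall x y : V, ip (C x) y = ip x (D y).

Definition A_selfadjoint (A C : V -> V) : Prop :=
  exists D : V -> V, is_adjoint C D /\ forall x : V, A (C x) = D (A x).

Definition Anorm (A : V -> V) (x : V) : R[i] := sqrtC (ip (A x) x).

Definition A_projection (A T : V -> V) : Prop :=
  forall y s : V, closure_range T s -> Anorm A (y - T y) <= Anorm A (y - s).

Definition op_idempotent (C : V -> V) : Prop :=
  forall x : V, C (C x) = C x.

End Hilbert.

From HB Require Import structures.
From mathcomp Require Import all_boot all_order all_algebra.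
From mathcomp Require Import reals complex ring.
From Stdlib Require Import IndefiniteDescription.
Set Implicit Arguments. Unset Strict Implicit. Unset Printing Implicit Defensive.
Import Order.TTheory GRing.Theory Num.Theory.
Local Open Scope ring_scope.

(* Write Q := P T.  Since A P = A, the A-seminorm cannot tell T and Q apart.
   T is an A-projection iff every residual y - T y is A-orthogonal to R(T):
   one direction is a first-variation argument along the vectors T x, the
   other is Pythagoras for the A-seminorm.  This orthogonality says exactly
   that Q is A-symmetric, <A Q y, x> = <A y, Q x>.  Hence A Q (y - Q y) = 0,
   so T (Q y) - Q y is orthogonal to cl R(A) and Q is idempotent.  Finally,
   for u in cl R(A) the functional x |-> <Q x, u> is represented by the limit
   of A Q z_n, where A z_n -> u; this sequence is Cauchy because
   ||A Q z|| <= ||T|| ||A z||.  As <Q x, y> = <Q x, P y>, this yields the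
   adjoint D of Q, and A Q = D A follows from the A-symmetry of Q. *)

Lemma mul_conjC_addr_le (C : numClosedFieldType) (c1 c2 : C) :
  (c1 + c2) * (c1 + c2)^* <= 2%:R * (c1 * c1^*) + 2%:R * (c2 * c2^*).
Proof.
rewrite -!normCK; apply: (@le_trans _ _ ((`|c1| + `|c2|) ^+ 2)).
  by rewrite ler_pXn2r ?nnegrE ?addr_ge0 ?ler_normD.
rewrite -subr_ge0.
have -> : 2%:R * `|c1| ^+ 2 + 2%:R * `|c2| ^+ 2 - (`|c1| + `|c2|) ^+ 2
        = (`|c1| - `|c2|) * (`|c1| - `|c2|)^*.
  by rewrite conj_Creal ?realB //; ring.
exact: mul_conjC_ge0.
Qed.

Lemma ge0_infinitesimal_eq0 (F : numFieldType) (r K : F) : 0 <= r -> 0 <= K ->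
  (forall e, 0 < e -> r <= K * e) -> r = 0.
Proof.
move=> r_ge0 K_ge0 small; apply/le_anti; rewrite r_ge0 andbT.
apply/ler_addgt0Pr => e e_gt0; rewrite add0r.
have K1_gt0 : 0 < K + 1 by rewrite ltr_wpDl.
apply: le_trans (small _ (divr_gt0 e_gt0 K1_gt0)) _.
by rewrite mulrCA ler_piMr ?ltW // ltr_pdivrMr // mul1r ltrDl.
Qed.

Lemma eventually_invSn_lt (R : realType) (e : R[i]) : 0 < e ->
  exists N : nat, forall n, (N <= n)%N -> n.+1%:R^-1 < e.
Proof.
move=> e_gt0; have [a ea] : exists a : R, e = (a%:C)%C by apply/complex_realP/gtr0_real.
rewrite ea ltcR in e_gt0.
have ia_ge0 : 0 <= a^-1 by rewrite invr_ge0 ltW.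
exists (Num.Def.archi_bound a^-1) => n le_Nn.
have : (n.+1%:R : R)^-1 < a.
  rewrite -[a]invrK ltf_pV2 ?posrE ?invr_gt0 ?ltr0Sn //.
  by apply: lt_le_trans (archi_boundP ia_ge0) _; rewrite ler_nat leqW.
by rewrite ea -(rmorph_nat (real_complex R)) -fmorphV ltcR.
Qed.

Section InnerProductSpace.
Variables (R : realType) (V : lmodType R[i]) (ip : V -> V -> R[i]).
Hypothesis Hip : is_inner_product ip.

Lemma ipDl x y z : ip (x + y) z = ip x z + ip y z.
Proof. by case: Hip => lin _ _ _; have := lin 1 x y z; rewrite scale1r mul1r. Qed.

Lemma ip0l z : ip 0 z = 0.
Proof. by apply: (@addrI _ (ip 0 z)); rewrite -ipDl !addr0. Qed.

Lemma ipZl a x z : ip (a *: x) z = a * ip x z.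
Proof. by case: Hip => lin _ _ _; have := lin a x 0 z; rewrite !addr0 ip0l addr0. Qed.

Lemma ipNl x z : ip (- x) z = - ip x z.
Proof. by rewrite -scaleN1r ipZl mulN1r. Qed.

Lemma ipBl x y z : ip (x - y) z = ip x z - ip y z.
Proof. by rewrite ipDl ipNl. Qed.

Lemma ipC x y : ip x y = (ip y x)^*.
Proof. by case: Hip. Qed.

Lemma ipDr x y z : ip z (x + y) = ip z x + ip z y.
Proof. by rewrite (ipC z x) (ipC z y) ipC ipDl rmorphD. Qed.

Lemma ip0r z : ip z 0 = 0.
Proof. by rewrite ipC ip0l conjC0. Qed.

Lemma ipZr a x z : ip z (a *: x) = a^* * ip z x.
Proof. by rewrite (ipC z x) ipC ipZl rmorphM. Qed.

Lemma ipNr x z : ip z (- x) = - ip z x.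
Proof. by rewrite (ipC z x) ipC ipNl rmorphN. Qed.

Lemma ipBr x y z : ip z (x - y) = ip z x - ip z y.
Proof. by rewrite ipDr ipNr. Qed.

Lemma ipNN x : ip (- x) (- x) = ip x x.
Proof. by rewrite ipNl ipNr opprK. Qed.

Lemma ipxx_ge0 x : 0 <= ip x x.
Proof. by case: Hip. Qed.

Lemma conj_ipxx x : (ip x x)^* = ip x x.
Proof. exact/conj_Creal/ger0_real/ipxx_ge0. Qed.

Lemma ipxx_eq0 x : ip x x = 0 -> x = 0.
Proof. by case: Hip => _ _ _; apply. Qed.

Lemma ipxx_gt0 x : x != 0 -> 0 < ip x x.
Proof. by move=> x_neq0; rewrite lt_def ipxx_ge0 andbT; apply: contra_neq x_neq0 => /ipxx_eq0. Qed.

Lemma CauchySchwarz_ip x y : ip x y * (ip x y)^* <= ip x x * ip y y.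
Proof.
have [->|y_neq0] := eqVneq y 0; first by rewrite ip0r mul0r ip0r mulr0.
set n := ip y y; have n_gt0 : 0 < n by apply: ipxx_gt0.
set c := ip x y.
have cn_conj : (c / n)^* = c^* / n by rewrite rmorphM fmorphV; congr (_ * _^-1); exact: conj_ipxx.
have := ipxx_ge0 (x - (c / n) *: y).
rewrite ipBl !ipBr !ipZl !ipZr -/n -/c (ipC y x) -/c cn_conj.
have -> : ip x x - c^* / n * c - (c / n * c^* - c / n * (c^* / n * n))
        = ip x x - c * c^* / n by field; rewrite gt_eqF.
by rewrite subr_ge0 ler_pdivrMr.
Qed.

Lemma ipDD_le x y : ip (x + y) (x + y) <= 2%:R * ip x x + 2%:R * ip y y.
Proof.
have <- : ip (x + y) (x + y) + ip (x - y) (x - y) = 2%:R * ip x x + 2%:R * ip y y.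
  by rewrite !ipDl !ipDr !ipNl !ipNr; ring.
by rewrite lerDl ipxx_ge0.
Qed.

Lemma hnorm0 : hnorm ip 0 = 0.
Proof. by rewrite /hnorm ip0l sqrtC0. Qed.

Lemma hnorm_ltE z e : 0 < e -> (hnorm ip z < e) = (ip z z < e ^+ 2).
Proof.
move=> e_gt0; rewrite /hnorm -{1}(sqrCK (ltW e_gt0)).
by rewrite ltr_sqrtC ?nnegrE ?ipxx_ge0 ?exprn_ge0 ?ltW.
Qed.

Lemma bounded_op_ip_le (T : V -> V) :
  (exists M, forall x, hnorm ip (T x) <= M * hnorm ip x) ->
  exists2 K, 0 <= K & forall x, ip (T x) (T x) <= K * ip x x.
Proof.
case=> M HM; exists (M * M^*) => [|x]; first exact: mul_conjC_ge0.
have [->|x_neq0] := eqVneq x 0.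
  have := HM 0; rewrite hnorm0 mulr0 /hnorm sqrtC_le0 => /eqP->.
  by rewrite ip0l mulr0.
have nx_gt0 : 0 < hnorm ip x by rewrite /hnorm sqrtC_gt0 ipxx_gt0.
have M_ge0 : 0 <= M.
  by rewrite -(pmulr_lge0 _ nx_gt0); apply: le_trans (HM x); rewrite sqrtC_ge0 ipxx_ge0.
have := HM x; rewrite -(ler_pXn2r (n := 2)) // ?nnegrE ?mulr_ge0 ?sqrtC_ge0 ?ipxx_ge0 //.
by rewrite exprMn /hnorm !sqrtCK conj_Creal ?ger0_real.
Qed.

Lemma closure_range_self (S : V -> V) x : closure_range ip S (S x).
Proof. by move=> e e_gt0; exists x; rewrite subrr hnorm0. Qed.

Lemma closure_range_ip (S : V -> V) y : closure_range ip S y ->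
  forall e, 0 < e -> exists x, ip (y - S x) (y - S x) < e.
Proof.
move=> Sy e e_gt0; have [|x] := Sy (sqrtC e); first by rewrite sqrtC_gt0.
by rewrite hnorm_ltE ?sqrtC_gt0 // sqrtCK; exists x.
Qed.

Lemma orthogonal_closure_range (S : V -> V) g : (forall z, ip g (S z) = 0) ->
  forall m, closure_range ip S m -> ip g m = 0.
Proof.
move=> g_orth m Sm; apply/eqP; rewrite -mul_conjC_eq0; apply/eqP.
apply: (ge0_infinitesimal_eq0 (mul_conjC_ge0 _) (ipxx_ge0 g)) => e e_gt0.
have [z hz] := closure_range_ip Sm e_gt0.
rewrite -[ip g m]subr0 -(g_orth z) -ipBr.
by apply: le_trans (CauchySchwarz_ip _ _) _; rewrite ler_wpM2l ?ipxx_ge0 ?ltW.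
Qed.

Section OrthogonalProjection.
Variables (P : V -> V) (M : V -> Prop).
Hypotheses (HPM : forall x, M (P x)) (HPo : forall x m, M m -> ip (x - P x) m = 0).

Lemma ip_orth_projr m z : M m -> ip m (P z) = ip m z.
Proof.
move=> Mm; apply/eqP; rewrite -subr_eq0 -ipBr ipC.
by rewrite -opprB ipNl HPo ?oppr0 ?conjC0.
Qed.

Lemma orth_proj_uniq x m : M m -> (forall m', M m' -> ip (x - m) m' = 0) -> P x = m.
Proof.
move=> Mm m_orth; apply/eqP; rewrite -subr_eq0; apply/eqP/ipxx_eq0.
have E : P x - m = (x - m) - (x - P x) by rewrite opprB [RHS]addrC addrA subrK.
by rewrite {1}E ipBl !ipBr !m_orth ?HPo ?HPM // !subrr.
Qed.

Lemma orth_proj_ip_le x : ip (P x) (P x) <= ip x x.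
Proof.
have d_orth : ip (x - P x) (P x) = 0 by apply: HPo.
have E : x = P x + (x - P x) by rewrite addrC subrK.
move: (x - P x) d_orth E => d d_orth E; rewrite {3 4}E.
rewrite ipDl !ipDr d_orth (ipC (P x) d) d_orth conjC0 addr0 add0r.
by rewrite lerDl ipxx_ge0.
Qed.

End OrthogonalProjection.

Section AdjointOnClosure.
Variables (S G F : V -> V) (K : R[i]).
Hypotheses (HS : linear S) (HG : linear G) (HK0 : 0 <= K).
Hypothesis HGS : forall z, ip (G z) (G z) <= K * ip (S z) (S z).
Hypothesis HFG : forall x z, ip (F x) (S z) = ip x (G z).

HB.instance Definition _ := GRing.isLinear.Build R[i] V V *:%R S HS.
HB.instance Definition _ := GRing.isLinear.Build R[i] V V *:%R G HG.

Section ApproximatingSequence.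
Variables (u : V) (z : nat -> V).
Hypothesis Sz_approx : forall n, ip (u - S (z n)) (u - S (z n)) < n.+1%:R^-1.

Lemma cauchy_seq_image_approx : cauchy_seq ip (G \o z).
Proof.
move=> e e_gt0; pose B := 4%:R * K + 1; pose c := e ^+ 2 / B.
have B_gt0 : 0 < B by rewrite ltr_wpDl ?mulr_ge0.
have [N hN] := eventually_invSn_lt (divr_gt0 (exprn_gt0 2 e_gt0) B_gt0).
exists N => m n le_Nm le_Nn; rewrite hnorm_ltE //= -linearB.
apply: le_lt_trans (HGS _) _.
have -> : S (z m - z n) = - (u - S (z m)) + (u - S (z n)).
  by rewrite linearB opprB addrA subrK.
apply: (@le_lt_trans _ _ (K * (2%:R * c + 2%:R * c))).
  apply: (ler_wpM2l HK0); apply: le_trans (ipDD_le _ _) _; rewrite ipNN.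
  by apply: lerD; rewrite ler_wpM2l ?ltW ?(lt_trans (Sz_approx _)) ?hN.
have -> : K * (2%:R * c + 2%:R * c) = e ^+ 2 * (4%:R * K / B) by rewrite /c; ring.
by rewrite gtr_pMr ?exprn_gt0 // ltr_pdivrMr // mul1r ltrDl.
Qed.

Lemma ip_limit_image_approx w : converges_to ip (G \o z) w ->
  forall x, ip (F x) u = ip x w.
Proof.
move=> Gz_w x; apply/eqP; rewrite -subr_eq0 -mul_conjC_eq0; apply/eqP.
have C_ge0 : 0 <= 2%:R * ip (F x) (F x) + 2%:R * ip x x.
  by rewrite addr_ge0 ?mulr_ge0 ?ipxx_ge0.
apply: (ge0_infinitesimal_eq0 (mul_conjC_ge0 _) C_ge0) => e e_gt0.
have [N1 hN1] := eventually_invSn_lt e_gt0.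
have [|N2 hN2] := Gz_w (sqrtC e); first by rewrite sqrtC_gt0.
pose n := maxn N1 N2.
have -> : ip (F x) u - ip x w = ip (F x) (u - S (z n)) + ip x (G (z n) - w).
  by rewrite !ipBr HFG addrA subrK.
apply: le_trans (mul_conjC_addr_le _ _) _; rewrite [X in _ <= X]mulrDl -!mulrA.
apply: lerD; apply: (ler_wpM2l (ler0n _ 2)); apply: le_trans (CauchySchwarz_ip _ _) _;
  apply: (ler_wpM2l (ipxx_ge0 _)); apply: ltW.
  exact: lt_trans (Sz_approx n) (hN1 n (leq_maxl _ _)).
by move: (hN2 n (leq_maxr _ _)); rewrite hnorm_ltE ?sqrtC_gt0 // sqrtCK.
Qed.

End ApproximatingSequence.

Hypothesis Hcomp : complete_ip ip.

Lemma adjoint_on_closure_range u :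
  closure_range ip S u -> exists w, forall x, ip (F x) u = ip x w.
Proof.
move=> Su; have approx n : exists z, ip (u - S z) (u - S z) < n.+1%:R^-1.
  by apply: (closure_range_ip Su); rewrite invr_gt0 ltr0Sn.
have [z hz] := functional_choice _ approx.
have [w hw] := Hcomp (cauchy_seq_image_approx hz).
by exists w; apply: ip_limit_image_approx hw.
Qed.

End AdjointOnClosure.

Section PositiveOperator.
Variable A : V -> V.
Hypotheses (HA : linear A) (HApos : forall x, 0 <= ip (A x) x).

HB.instance Definition _ := GRing.isLinear.Build R[i] V V *:%R A HA.

(* <A z, z> is real; polarize with z = x + y and z = x + i y. *)
Lemma posop_sym x y : ip (A x) y = ip x (A y).
Proof.
have real z : ip z (A z) = ip (A z) z by rewrite ipC conj_Creal ?ger0_real.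
have E1 := real (x + y); have E2 := real (x + 'i *: y).
rewrite linearD /= !ipDl !ipDr (real x) (real y) in E1.
rewrite linearD linearZ /= !ipDl !ipDr !ipZl !ipZr (real x) (real y) conjCi in E2.
have i2_neq0 : 2%:R * 'i != 0 :> R[i] by rewrite mulf_neq0 ?neq0Ci ?pnatr_eq0.
apply: (mulfI i2_neq0); apply/eqP; rewrite -subr_eq0; apply/eqP.
have cancel (L1 R1 L2 R2 : R[i]) : L1 = R1 -> L2 = R2 -> 'i * (L1 - R1) - (L2 - R2) = 0.
  by move=> -> ->; rewrite !subrr mulr0 subr0.
by rewrite -[RHS](cancel _ _ _ _ (esym E1) (esym E2)); ring.
Qed.

Lemma posop_orth_of_min u w :
  (forall l, ip (A u) u <= ip (A (u - l *: w)) (u - l *: w)) -> ip (A u) w = 0.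
Proof.
move=> u_min; set c := ip (A u) w; set k := ip (A w) w.
have k1_gt0 : 0 < k + 1 by rewrite ltr_wpDl ?HApos.
have := u_min (c / (k + 1)).
rewrite linearB linearZ /= ipBl !ipBr !ipZl !ipZr -/c -/k (posop_sym w u) (ipC w (A u)) -/c.
rewrite rmorphM fmorphV /= (conj_Creal (ger0_real (ltW k1_gt0))) -subr_ge0.
(* the step c / (k + 1) decreases the A-seminorm by |c|^2 (k + 2) / (k + 1)^2 *)
have -> : ip (A u) u - c^* / (k + 1) * c
          - (c / (k + 1) * c^* - c / (k + 1) * (c^* / (k + 1) * k)) - ip (A u) u
        = - (c * c^* * ((k + 2%:R) / (k + 1) ^+ 2)).
  by field; rewrite gt_eqF.
have k2_gt0 : 0 < (k + 2%:R) / (k + 1) ^+ 2 by rewrite divr_gt0 ?exprn_gt0 ?ltr_wpDl ?HApos.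
rewrite oppr_ge0 pmulr_lle0 // => cc_le0.
have /eqP : c * c^* = 0 by apply/le_anti; rewrite cc_le0 mul_conjC_ge0.
by rewrite mul_conjC_eq0 => /eqP.
Qed.

Variable P : V -> V.
Hypotheses (HPM : forall x, closure_range ip A (P x))
           (HPo : forall x m, closure_range ip A m -> ip (x - P x) m = 0).

Lemma posop_proj_range x : A (P x) = A x.
Proof.
have res_orth z : ip (A (x - P x)) z = 0.
  by rewrite posop_sym; apply/HPo/closure_range_self.
by apply/esym/eqP; rewrite -subr_eq0 -linearB; apply/eqP/ipxx_eq0/res_orth.
Qed.

Variable T : V -> V.
Hypothesis HT : linear T.

HB.instance Definition _ := GRing.isLinear.Build R[i] V V *:%R T HT.

Lemma A_projection_residual_orth :
  A_projection ip A T -> forall y x, ip (A (y - T y)) (T x) = 0.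
Proof.
move=> AprojT y x; apply: posop_orth_of_min => l.
have := AprojT y (T (y + l *: x)) (closure_range_self _ _).
rewrite /Anorm ler_sqrtC ?nnegrE ?HApos //.
by rewrite [T (y + _)]linearD /= [T (_ *: _)]linearZ /= opprD addrA.
Qed.

Lemma A_projection_of_residual_orth :
  (forall y x, ip (A (y - T y)) (T x) = 0) -> A_projection ip A T.
Proof.
move=> orth y s Ts; rewrite /Anorm ler_sqrtC ?nnegrE ?HApos //.
have -> : y - s = (y - T y) + (T y - s) by rewrite addrA subrK.
have c0 : ip (A (y - T y)) (T y - s) = 0.
  by rewrite ipBr orth (orthogonal_closure_range (orth y) Ts) subrr.
move: (y - T y) (T y - s) c0 => u v c0.
rewrite linearD ipDl !ipDr c0 (posop_sym v u) (ipC v (A u)) c0 conjC0.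
by rewrite addr0 add0r lerDl HApos.
Qed.

Lemma residual_orth_of_PT_idem_sa :
  op_idempotent (fun x => P (T x)) -> A_selfadjoint ip A (fun x => P (T x)) ->
  forall y x, ip (A (y - T y)) (T x) = 0.
Proof.
move=> idem [D [Dadj AD]] y x.
have AQ_sym w : ip (A w) (T x) = ip (A (P (T w))) x.
  by rewrite -(ip_orth_projr HPo (T x) (closure_range_self _ w)) ipC Dadj -AD -ipC.
have -> : A (y - T y) = A (y - P (T y)) by rewrite !linearB /= posop_proj_range.
rewrite AQ_sym posop_proj_range !linearB /=.
by rewrite -[A (T y)]posop_proj_range -[A (T (P (T y)))]posop_proj_range idem subrr ip0l.
Qed.

Section ResidualOrthogonal.
Hypothesis orth : forall y x, ip (A (y - T y)) (T x) = 0.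

Lemma PT_residual_orth y x : ip (A (y - P (T y))) (P (T x)) = 0.
Proof.
have -> : A (y - P (T y)) = A (y - T y) by rewrite !linearB /= posop_proj_range.
by rewrite (ip_orth_projr HPo _ (closure_range_self _ _)) orth.
Qed.

Lemma PT_A_sym x y : ip (A (P (T y))) x = ip (A y) (P (T x)).
Proof.
have swap b a : ip (A b) (P (T a)) = ip (A (P (T b))) (P (T a)).
  by apply/eqP; rewrite -subr_eq0 -ipBl -linearB PT_residual_orth.
by rewrite posop_sym ipC swap -ipC -posop_sym -swap.
Qed.

Lemma PT_idem : op_idempotent (fun x => P (T x)).
Proof.
move=> y; apply: (orth_proj_uniq HPM HPo (HPM _)) => m Am.
have AQ_res : A (P (T (y - P (T y)))) = 0.
  by apply: ipxx_eq0; rewrite PT_A_sym PT_residual_orth.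
have -> : T (P (T y)) - P (T y) = (T (P (T y)) - T y) + (T y - P (T y)).
  by rewrite addrA subrK.
rewrite ipDl HPo // addr0; apply: (orthogonal_closure_range _ Am) => z.
rewrite -posop_sym.
have -> : A (T (P (T y)) - T y) = - A (P (T (y - P (T y)))).
  rewrite posop_proj_range [LHS]linearB [T (y - _)]linearB /=.
  by rewrite [A (_ - _)]linearB /= opprB.
by rewrite AQ_res oppr0 ip0l.
Qed.

Variable K : R[i].
Hypotheses (HK0 : 0 <= K) (HTK : forall x, ip (T x) (T x) <= K * ip x x).

Lemma ip_AT_le d : ip (A (T d)) (A (T d)) <= K * ip (A d) (A d).
Proof.
rewrite -posop_proj_range; set v := A (P (T d)).
have [->|v_neq0] := eqVneq (ip v v) 0; first by rewrite mulr_ge0 ?ipxx_ge0.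
have v_gt0 : 0 < ip v v by rewrite lt_def v_neq0 ipxx_ge0.
have vv : ip v v = ip (A d) (P (T v)) by rewrite {1}/v PT_A_sym.
have PTv_le : ip (P (T v)) (P (T v)) <= K * ip v v.
  exact: le_trans (orth_proj_ip_le HPM HPo _) (HTK v).
have := CauchySchwarz_ip (A d) (P (T v)); rewrite -vv conj_ipxx => CS_v.
have := le_trans CS_v (ler_wpM2l (ipxx_ge0 _) PTv_le).
by rewrite mulrA ler_pM2r // mulrC.
Qed.

Hypothesis Hcomp : complete_ip ip.

Lemma PT_A_selfadjoint : A_selfadjoint ip A (fun x => P (T x)).
Proof.
have HAT : linear (fun z => A (T z)) by move=> a z1 z2; rewrite !linearP.
have PT_AT x z : ip (P (T x)) (A z) = ip x (A (T z)).
  by rewrite ipC -PT_A_sym -ipC posop_proj_range.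
have adj y : exists w, forall x, ip (P (T x)) y = ip x w.
  have [w hw] := adjoint_on_closure_range HA HAT HK0 ip_AT_le PT_AT Hcomp (HPM y).
  by exists w => x; rewrite -hw (ip_orth_projr HPo).
have [D hD] := functional_choice _ adj.
exists D; split=> [x y|x]; first exact: hD.
apply/eqP; rewrite -subr_eq0; apply/eqP/ipxx_eq0.
by rewrite ipBr -hD (ipC _ (A x)) -PT_A_sym -ipC subrr.
Qed.

End ResidualOrthogonal.
End PositiveOperator.

End InnerProductSpace.

Theorem mainTheorem3 (R : realType) (V : lmodType R[i]) (ip : V -> V -> R[i])
  (A T P : V -> V) :
  separable_hilbert ip ->
  positive_op ip A ->
  bounded_op ip T ->
  is_orth_proj ip P (closure_range ip A) ->
  (A_projection ip A T <->
   op_idempotent (fun x : V => P (T x)) /\ A_selfadjoint ip A (fun x : V => P (T x))).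
Proof.
move=> [Hip Hcomp _] [[HA _] HApos] [HT HTb] [HPM HPo].
have [K K0 HTK] := bounded_op_ip_le Hip HTb.
split=> [AprojT | [idem sa]].
  have orth := A_projection_residual_orth Hip HA HApos HT AprojT.
  split; first exact: (PT_idem Hip HA HApos HPM HPo HT orth).
  exact: (PT_A_selfadjoint Hip HA HApos HPM HPo HT orth K0 HTK Hcomp).
have orth := residual_orth_of_PT_idem_sa Hip HA HApos HPo HT idem sa.
exact: (A_projection_of_residual_orth Hip HA HApos orth).
Qed.
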